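(* Let $(A,C,k)$ be an instance with $n$ voters, let $f:\mathbb{N}\to\mathbb{R}$, let $t$ be a positive integer, and let $W$ be an $f$-representative committee with $\max_{c\in C\setminus W}|N_c| \ge t\frac{n}{k}$. Then the utilitarian ratio of $W$ is at least $\min\left(\frac12, \frac{f(t)}{2k}\right)$.
   Context: An instance $(A,C,k)$ consists of a finite nonempty candidate set $C$, voters $N=\{1,\dots,n\}$, approval sets $A_i\subseteq C$, and a committee size $1\le k\le |C|$. $N_c=\{i\in N: c\in A_i\}$. A committee is a set $W\subseteq C$ with $|W|\le k$. The utilitarian welfare is $\mathrm{sw}(W)=\sum_{i\in N}|A_i\cap W|$, and the utilitarian ratio of $W$ is $\mathrm{sw}(W)/\max\{\mathrm{sw}(W'): W'\subseteq C, |W'|=k\}$. A committee $W$ is $f$-representative if for every $c\in C\setminus W$, every $\ell\in\{1,\dots,k\}$, and every $N'\subseteq N_c$ with $|N'|\ge \ell\frac{n}{k}$, we have $\frac{1}{|N'|}\sum_{i\in N'}|A_i\cap W|\ge f(\ell)$. *)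

From mathcomp Require Import all_boot all_order all_algebra.
Set Implicit Arguments. Unset Strict Implicit. Unset Printing Implicit Defensive.
Import Order.TTheory GRing.Theory Num.Theory.
Local Open Scope ring_scope.

(* An instance: candidates form a finType C, voters are 'I_n,
   approval sets A : 'I_n -> {set C}, committee size k. *)

Definition supporters (C : finType) (n : nat) (A : 'I_n -> {set C}) (c : C)
  : {set 'I_n} := [set i | c \in A i].

Definition sw (C : finType) (n : nat) (A : 'I_n -> {set C}) (W : {set C}) : nat :=
  (\sum_(i < n) #|A i :&: W|)%N.

Definition max_sw (C : finType) (n : nat) (A : 'I_n -> {set C}) (k : nat) : nat :=
  (\max_(W' : {set C} | #|W'| == k) sw A W')%N.

Definition util_ratio (R : realFieldType) (C : finType) (n : nat)
  (A : 'I_n -> {set C}) (k : nat) (W : {set C}) : R :=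
  (sw A W)%:R / (max_sw A k)%:R.

Definition f_representative (R : realFieldType) (C : finType) (n : nat)
  (A : 'I_n -> {set C}) (k : nat) (f : nat -> R) (W : {set C}) : Prop :=
  forall c : C, c \notin W ->
  forall l : nat, (1 <= l <= k)%N ->
  forall N' : {set 'I_n}, N' \subset supporters A c ->
    ((#|N'|%:R : R) >= l%:R * (n%:R / k%:R)) ->
    (#|N'|%:R)^-1 * (\sum_(i in N') (#|A i :&: W|)%:R : R) >= f l.

(* Let c be an unelected candidate with the most supporters, so that
   m := |N_c| >= t n / k and hence t <= k. Representativeness applied to N_c
   with l = t gives sw(W) >= f(t) m. In any committee W' of size k, each
   candidate of W' \ W contributes at most m, so OPT <= sw(W) + k m, whence
   sw(W) / OPT >= sw(W) / (sw(W) + k m) >= min(1/2, f(t) / (2k)). *)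

From mathcomp Require Import all_boot all_order all_algebra.
From mathcomp Require Import lra.
Set Implicit Arguments.
Unset Strict Implicit.
Unset Printing Implicit Defensive.
Import Order.TTheory GRing.Theory Num.Theory.
Local Open Scope ring_scope.

Lemma superset_of_card (T : finType) (W : {set T}) (j : nat) :
  (#|W| <= j <= #|T|)%N -> exists2 B : {set T}, W \subset B & #|B| = j.
Proof.
elim: j => [|j IH] /andP[leWj lejT].
  by exists W => //; apply/eqP; rewrite -leqn0.
have [<-|neWj] := eqVneq #|W| j.+1; first by exists W.
have [|B sWB cardB] := IH; first by rewrite -ltnS ltn_neqAle neWj leWj ltnW.
have /card_gt0P[x] : (0 < #|~: B|)%N.
  by rewrite -(leq_add2l #|B|) addn1 cardsC cardB.
rewrite inE => xB; exists (x |: B); first exact: subset_trans sWB (subsetUr _ _).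
by rewrite cardsU1 xB cardB.
Qed.

Lemma eq_bigmax_cond_gt0 (I : finType) (P : pred I) (F : I -> nat) :
  (0 < \max_(i | P i) F i)%N -> {i0 | P i0 & \max_(i | P i) F i = F i0}.
Proof.
move=> max_gt0; apply: eq_bigmax_cond; rewrite lt0n.
by apply: contraTneq max_gt0 => /card0_eq P0; rewrite big_pred0.
Qed.

Section Welfare.
Variables (C : finType) (n : nat) (A : 'I_n -> {set C}).

Lemma sw_supportersE (D : {set C}) :
  sw A D = (\sum_(c in D) #|supporters A c|)%N.
Proof.
have cardIE i : #|A i :&: D| = (\sum_(c in D) (c \in A i))%N.
  rewrite -sum1_card big_mkcond [RHS]big_mkcond /=.
  by apply: eq_bigr => c _; rewrite inE andbC; case: (c \in D).
rewrite /sw (eq_bigr _ (fun i _ => cardIE i)) exchange_big; apply: eq_bigr => c _.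
by rewrite -sum1_card [RHS]big_mkcond; apply: eq_bigr => i _; rewrite inE.
Qed.

Lemma sw_mono (B D : {set C}) : B \subset D -> (sw A B <= sw A D)%N.
Proof. by move=> sBD; apply: leq_sum => i _; apply/subset_leq_card/setIS. Qed.

Lemma sw_setU (B D : {set C}) : (sw A (B :|: D) <= sw A B + sw A D)%N.
Proof.
rewrite /sw -big_split; apply: leq_sum => i _.
by rewrite setIUr cardsU leq_subr.
Qed.

Lemma sw_le_card_mul (D : {set C}) (m : nat) :
  {in D, forall c, #|supporters A c| <= m}%N -> (sw A D <= #|D| * m)%N.
Proof. by move=> leDm; rewrite sw_supportersE -sum_nat_const leq_sum. Qed.

Lemma max_sw_le (W : {set C}) (k m : nat) :
  (forall c, c \notin W -> #|supporters A c| <= m)%N ->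
  (max_sw A k <= sw A W + k * m)%N.
Proof.
move=> le_m; apply/bigmax_leqP => W' /eqP cardW'.
have sW'U : W' \subset W :|: (W' :\: W).
  by apply/subsetP => x; rewrite !inE; case: (x \in W).
apply: leq_trans (sw_mono sW'U) _; apply: leq_trans (sw_setU _ _) _.
rewrite leq_add2l; apply: leq_trans (sw_le_card_mul (m := m) _) _.
  by move=> c; rewrite inE => /andP[/le_m].
by rewrite leq_mul2r -cardW' subset_leq_card ?subsetDl ?orbT.
Qed.

Lemma sw_le_max_sw (W : {set C}) (k : nat) :
  (#|W| <= k <= #|C|)%N -> (sw A W <= max_sw A k)%N.
Proof.
case/superset_of_card => B sWB cardB; apply: leq_trans (sw_mono sWB) _.
by apply: leq_bigmax_cond; rewrite cardB.
Qed.

Lemma sum_le_sw (V : {set 'I_n}) (W : {set C}) :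
  (\sum_(i in V) #|A i :&: W| <= sw A W)%N.
Proof. by rewrite /sw [X in (_ <= X)%N](bigID [in V]) /= leq_addr. Qed.

Lemma f_representative_le_sw (R : realFieldType) (k : nat) (f : nat -> R)
    (W : {set C}) (c : C) (l : nat) :
  f_representative A k f W -> c \notin W -> (1 <= l <= k)%N ->
  l%:R * (n%:R / k%:R) <= #|supporters A c|%:R :> R ->
  f l * #|supporters A c|%:R <= (sw A W)%:R.
Proof.
move=> reprW cW lk le_lnk_c; have := reprW c cW l lk _ (subxx _) le_lnk_c.
have [->|c_gt0] := posnP #|supporters A c|; first by rewrite mulr0.
rewrite -natr_sum ler_pdivlMl ?ltr0n // mulrC => /le_trans; apply.
by rewrite ler_nat sum_le_sw.
Qed.

End Welfare.

(* s / M >= s / (s + k m), which is increasing in s, and s >= a m. *)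
Lemma min_half_le_ratio (R : realFieldType) (a s M k m : R) :
  0 < k -> 0 < m -> 0 <= s -> s <= M -> M <= s + k * m -> a * m <= s ->
  Num.min (1 / 2) (a / (2 * k)) <= s / M.
Proof.
move=> k_gt0 m_gt0 s_ge0 lesM leMs le_am_s; rewrite ge_min; apply/orP.
have [a_le0|a_gt0] := lerP a 0.
  right; apply: le_trans (divr_ge0 s_ge0 (le_trans s_ge0 lesM)).
  by rewrite ler_pdivrMr ?mul0r //; lra.
have s_gt0 : 0 < s by nra.
have M_gt0 : 0 < M by lra.
have [a_le_k|k_lt_a] := lerP a k.
  right; rewrite ler_pdivlMr // mulrAC ler_pdivrMr; last by lra.
  nra.
by left; rewrite ler_pdivlMr //; nra.
Qed.

Theorem lemma1 (R : realFieldType) (C : finType) (n : nat)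
  (A : 'I_n -> {set C}) (k : nat) (f : nat -> R) (t : nat) (W : {set C}) :
  (0 < n)%N ->
  (1 <= k)%N -> (k <= #|C|)%N ->
  (0 < t)%N ->
  (#|W| <= k)%N ->
  f_representative A k f W ->
  (((\max_(c : C | c \notin W) #|supporters A c|)%N)%:R : R) >= t%:R * (n%:R / k%:R) ->
  util_ratio R A k W >= Num.min (1 / 2) (f t / (2 * k%:R)).
Proof.
move=> n_gt0 k_gt0 leqkC t_gt0 leWk reprW le_tnk_max.
have max_gt0 : (0 < \max_(c | c \notin W) #|supporters A c|)%N.
  rewrite -(ltr0n R); apply: lt_le_trans le_tnk_max.
  by rewrite !mulr_gt0 ?invr_gt0 ?ltr0n.
have [c c_notin_W max_eq] := eq_bigmax_cond_gt0 max_gt0.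
rewrite max_eq in le_tnk_max.
have le_tk : (t <= k)%N.
  have le_cn : #|supporters A c|%:R <= n%:R :> R.
    by rewrite ler_nat (leq_trans (max_card _)) ?card_ord.
  move: (le_trans le_tnk_max le_cn).
  by rewrite mulrCA ger_pMr ?ltr0n // ler_pdivrMr ?ltr0n // mul1r ler_nat.
apply: (min_half_le_ratio (m := #|supporters A c|%:R)).
- by rewrite ltr0n.
- by rewrite ltr0n -max_eq.
- by [].
- by rewrite ler_nat; apply: sw_le_max_sw; rewrite leWk.
- rewrite -natrM -natrD ler_nat; apply: max_sw_le => c' c'_notin_W.
  by rewrite -max_eq; exact: (leq_bigmax_cond (P := fun c => c \notin W)).
- by rewrite (f_representative_le_sw reprW) ?t_gt0.
Qed.
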